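(* Every ideal of a nilpotent-free Lie algebra is nilpotent-free (as a Lie algebra in its own right).
   Context: All algebras are finite-dimensional over an infinite field $K$. An element $x$ of a Lie algebra $L$ is nilpotent if $\operatorname{ad}x$ (acting on $L$) is a nilpotent linear map. $L$ is called nilpotent-free if every nilpotent element of $L$ lies in the center of $L$. *)

From HB Require Import structures.
From mathcomp Require Import all_boot all_order all_algebra.
Set Implicit Arguments. Unset Strict Implicit. Unset Printing Implicit Defensive.
Import GRing.Theory.
Local Open Scope ring_scope.

Definition infinite_field (K : fieldType) : Prop :=
  forall s : seq K, exists x : K, x \notin s.

Definition is_lie_bracket (K : fieldType) (L : vectType K) (br : L -> L -> L) : Prop :=
  [/\ (forall (a : K) (x y z : L), br (a *: x + y) z = a *: br x z + br y z),
      (forall (a : K) (x y z : L), br z (a *: x + y) = a *: br z x + br z y),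
      (forall x : L, br x x = 0) &
      (forall x y z : L, br x (br y z) + br y (br z x) + br z (br x y) = 0)].

Definition lie_ideal (K : fieldType) (L : vectType K) (br : L -> L -> L)
  (I : {vspace L}) : Prop :=
  forall x y : L, y \in I -> br x y \in I.

Definition nilpotent_free_on (K : fieldType) (L : vectType K) (br : L -> L -> L)
  (S : {vspace L}) : Prop :=
  forall x : L, x \in S ->
    (exists n : nat, forall y : L, y \in S -> iter n (br x) y = 0) ->
    forall y : L, y \in S -> br x y = 0.

Definition nilpotent_free (K : fieldType) (L : vectType K) (br : L -> L -> L) : Prop :=
  nilpotent_free_on br fullv.

(* If x lies in the ideal I then ad x maps L into I, so ad_L(x)^(n+1) factors
   as ad_I(x)^n after ad_L(x); nilpotency of ad x on I thus gives nilpotency on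
   L, and nilpotent-freeness of L makes x central in L, a fortiori in I. *)

From mathcomp Require Import all_boot all_order all_algebra.
Set Implicit Arguments.
Unset Strict Implicit.
Unset Printing Implicit Defensive.
Import GRing.Theory.
Local Open Scope ring_scope.

Section LieBracket.

Variables (K : fieldType) (L : vectType K) (br : L -> L -> L).
Hypothesis br_lie : is_lie_bracket br.

Lemma lie_bracketDl (u v z : L) : br (u + v) z = br u z + br v z.
Proof.
by case: br_lie => brZDl _ _ _; rewrite -[u in LHS]scale1r brZDl scale1r.
Qed.

Lemma lie_bracketDr (z u v : L) : br z (u + v) = br z u + br z v.
Proof.
by case: br_lie => _ brZDr _ _; rewrite -[u in LHS]scale1r brZDr scale1r.
Qed.

Lemma lie_bracketC (u v : L) : br u v = - br v u.
Proof.
case: br_lie => _ _ br_xx _; apply/eqP; rewrite -addr_eq0; apply/eqP.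
have := br_xx (u + v).
by rewrite lie_bracketDl !lie_bracketDr !br_xx add0r addr0.
Qed.

Lemma lie_ideal_bracketl (I : {vspace L}) (x y : L) :
  lie_ideal br I -> x \in I -> br x y \in I.
Proof. by move=> idI xI; rewrite lie_bracketC rpredN; apply: idI. Qed.

Lemma ad_nilpotent_from_ideal (I : {vspace L}) (x : L) (n : nat) :
  lie_ideal br I -> x \in I ->
  (forall y, y \in I -> iter n (br x) y = 0) ->
  forall y, iter n.+1 (br x) y = 0.
Proof.
by move=> idI xI nil_x y; rewrite iterSr; apply/nil_x/lie_ideal_bracketl.
Qed.

End LieBracket.

Theorem lemma8 (K : fieldType) (L : vectType K) (br : L -> L -> L)
  (I : {vspace L}) :
  infinite_field K ->
  is_lie_bracket br ->
  nilpotent_free br ->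
  lie_ideal br I ->
  nilpotent_free_on br I.
Proof.
move=> _ br_lie nfL idI x xI [n nil_x] y _.
apply: (nfL x (memvf x) _ y (memvf y)).
by exists n.+1 => z _; apply: (ad_nilpotent_from_ideal br_lie idI xI nil_x).
Qed.
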